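(* Let $X_1,\dots,X_n$ be i.i.d. copies of a non-negative absolutely continuous random variable $X$, and let $1\le k\le n$. Let $\tau_{k|n}(\mathbf X)$ be the lifetime of the $k$-out-of-$n$ system with component lifetimes $X_1,\dots,X_n$, $(\tau_{k|n}(\mathbf X))_t=(\tau_{k|n}(\mathbf X)-t\mid\tau_{k|n}(\mathbf X)>t)$, and $\tau_{k|n}(\mathbf X_t)$ the lifetime of the $k$-out-of-$n$ system built from independent used components with lifetimes distributed as $(X_i-t\mid X_i>t)$. Then for any fixed $t\ge0$, $\tau_{k|n}(\mathbf X_t)\underset{c}{\prec}(\tau_{k|n}(\mathbf X))_t$.
   Context: All random variables are non-negative and absolutely continuous with support $[0,\infty)$. For a random variable $W$: density $f_W$, survival $\bar F_W$, hazard rate $r_W=f_W/\bar F_W$. $U\underset{c}{\prec}V$ means $r_U(x)/r_V(x)$ is increasing (non-decreasing) in $x\ge0$. A $k$-out-of-$n$ system functions as long as at least $k$ of its $n$ components function. *)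

From HB Require Import structures.
From mathcomp Require Import all_boot all_order all_algebra.
From mathcomp Require Import all_classical all_reals all_analysis.
Set Implicit Arguments. Unset Strict Implicit. Unset Printing Implicit Defensive.
Import Order.TTheory GRing.Theory Num.Theory.
Local Open Scope ring_scope.
Local Open Scope classical_set_scope.

Section Defs.
Variable R : realType.

Definition survival (f : R -> R) (x : R) : R :=
  fine (\int[lebesgue_measure]_(y in `]x, +oo[) (f y)%:E)%E.

(* Reliability polynomial of a k-out-of-n system with i.i.d. components:
   h(p) = P(at least k of n components work), each working w.p. p. *)
Definition kofn_poly (n k : nat) : {poly R} :=
  \sum_(k <= j < n.+1) ('C(n, j))%:R *: ('X ^+ j * (1 - 'X) ^+ (n - j)).

Record lifetime := Lifetime { dens : R -> R ; surv : R -> R }.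

Definition hazard (W : lifetime) (x : R) : R := dens W x / surv W x.

Definition lifetime_of (f : R -> R) : lifetime := Lifetime f (survival f).

Definition kofn (n k : nat) (W : lifetime) : lifetime :=
  Lifetime (fun x => (kofn_poly n k)^`().[surv W x] * dens W x)
           (fun x => (kofn_poly n k).[surv W x]).

Definition residual (t : R) (W : lifetime) : lifetime :=
  Lifetime (fun x => dens W (t + x) / surv W t)
           (fun x => surv W (t + x) / surv W t).

Definition c_order (U V : lifetime) : Prop :=
  forall x y : R, 0 <= x -> x <= y ->
    hazard U x / hazard V x <= hazard U y / hazard V y.

End Defs.

From HB Require Import structures.
From mathcomp Require Import all_boot all_order all_algebra.
From mathcomp Require Import all_classical all_reals all_analysis measurable_realfun.
From mathcomp Require Import ring lra.
Set Implicit Arguments. Unset Strict Implicit. Unset Printing Implicit Defensive.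
Import Order.TTheory GRing.Theory Num.Theory.
Local Open Scope ring_scope.

(* Write h for the reliability polynomial of the k-out-of-n system, s = Fbar(t)
   and q = Fbar(t + x).  The density f(t + x) cancels in the ratio of the two
   hazards, which becomes E(q/s) / E(q) for the elasticity E(u) = u h'(u) / h(u).
   Since h'(u) = K u^(k-1) (1-u)^(n-k) and h(u) = u^k (1-u)^(n-k) T(u/(1-u))
   with T a polynomial with nonnegative coefficients, E(u) = K / T(odds u), and
   the ratio is T(odds q) / T(odds (q/s)).  For such T the dilation ratio
   T(l z) / T(z) increases both in z and in l >= 1; as odds (q/s) / odds q
   = (1-q)/(s-q) increases with q, the hazard ratio decreases in q, i.e.
   increases in x. *)

Section IntegralPositive.
Local Open Scope ereal_scope.
Local Open Scope classical_set_scope.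
Context d (T : measurableType d) (R : realType) (mu : {measure set T -> \bar R}).

Lemma integral_gt0 (D : set T) (f : T -> \bar R) : measurable D ->
  measurable_fun D f -> (forall x, D x -> 0 < f x) -> 0 < mu D ->
  0 < \int[mu]_(x in D) f x.
Proof.
move=> mD mf f_gt0 muD_gt0.
rewrite lt_neqAle integral_ge0 ?andbT; last by move=> x /f_gt0/ltW.
apply/eqP => int0.
have [N [mN muN0 DN]] : ae_eq mu D f (cst 0).
  apply/(ae_eq_integral_abs mu mD mf); rewrite int0.
  by apply: eq_integral => x /[!inE] /f_gt0/ltW/gee0_abs.
have : mu D <= mu N.
  apply: le_measure; rewrite ?inE // => x Dx; apply: DN => /(_ Dx) fx0.
  by have := f_gt0 x Dx; rewrite fx0 ltxx.
by rewrite muN0 leNgt muD_gt0.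
Qed.
End IntegralPositive.

Section Survival.
Local Open Scope classical_set_scope.
Variables (R : realType) (f : R -> R).
Hypotheses (f_meas : measurable_fun setT f) (f_ge0 : forall x, 0 <= f x)
  (f_tot : (\int[@lebesgue_measure R]_x (f x)%:E = 1)%E).

Let tail_integral (y : R) := (\int[@lebesgue_measure R]_(z in `]y, +oo[) (f z)%:E)%E.

Let measurable_EFin_f (D : set R) : measurable_fun D (fun z => (f z)%:E).
Proof. by apply/measurable_EFinP; apply: measurable_funS f_meas. Qed.

Let tail_integral_anti : {homo tail_integral : y1 y2 / y1 <= y2 >-> (y2 <= y1)%E}.
Proof.
move=> y1 y2 y12; apply: ge0_subset_integral => //; first exact: measurable_EFin_f.
- by move=> z _; rewrite lee_fin.
- by move=> z /=; rewrite !in_itv /= !andbT; apply: le_lt_trans.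
Qed.

Let tail_integral_ge0 y : (0 <= tail_integral y)%E.
Proof. by apply: integral_ge0 => z _; rewrite lee_fin. Qed.

Let tail_integral_le1 y : (tail_integral y <= 1)%E.
Proof.
rewrite -f_tot; apply: ge0_subset_integral => //; first exact: measurable_EFin_f.
by move=> z _; rewrite lee_fin.
Qed.

Let tail_integral_fin_num y : tail_integral y \is a fin_num.
Proof. by rewrite ge0_fin_numE // (le_lt_trans (tail_integral_le1 y)) ?ltey. Qed.

Let EFin_survival y : (survival f y)%:E = tail_integral y.
Proof. exact/fineK/tail_integral_fin_num. Qed.

Lemma survival_le1 y : survival f y <= 1.
Proof. by rewrite -lee_fin EFin_survival; apply: tail_integral_le1. Qed.

Lemma survival_anti : {homo survival f : y1 y2 / y1 <= y2 >-> y2 <= y1}.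
Proof. by move=> y1 y2 y12; rewrite -lee_fin !EFin_survival; apply: tail_integral_anti. Qed.

Lemma survival_gt0 y : (forall x, y < x -> 0 < f x) -> 0 < survival f y.
Proof.
move=> f_gt0; rewrite -lte_fin EFin_survival; apply: integral_gt0 => //.
- exact: measurable_EFin_f.
- by move=> x /=; rewrite in_itv /= andbT lte_fin => /f_gt0.
- rewrite -[X in (_ < X)%E]/(lebesgue_measure (`]y, +oo[ : set R)).
  by rewrite lebesgue_measure_itv /= ltry addye.
Qed.
End Survival.

Section NonnegCoefficients.
Variables (R : realFieldType) (p : {poly R}).
Hypothesis p_coef_ge0 : forall i, 0 <= p`_i.

Lemma horner_ge0 x : 0 <= x -> 0 <= p.[x].
Proof.
by move=> x_ge0; rewrite horner_coef; apply: sumr_ge0 => i _; rewrite mulr_ge0 ?exprn_ge0.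
Qed.

Lemma ler_horner x y : 0 <= x -> x <= y -> p.[x] <= p.[y].
Proof.
move=> x_ge0 xy; rewrite !horner_coef; apply: ler_sum => i _.
by rewrite ler_wpM2l // lerXn2r // nnegrE (le_trans x_ge0).
Qed.

Let monomial_dilate_ge0 (a b l : R) i j : 0 <= a -> a <= b -> 1 <= l ->
  0 <= (l ^+ j - l ^+ i) * (a ^+ i * b ^+ j - a ^+ j * b ^+ i).
Proof.
move=> a_ge0 ab l_ge1.
have b_ge0 : 0 <= b by apply: le_trans ab.
wlog ij : i j / (i <= j)%N.
  move=> ij_sym; case: (leqP i j) => [|/ltnW]; first exact: ij_sym.
  by move=> /ij_sym; rewrite -mulrNN !opprB.
rewrite mulr_ge0 // subr_ge0 ?ler_weXn2l // -(subnK ij) !exprD.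
rewrite -mulrA [X in _ <= X]mulrCA ler_wpM2r ?mulr_ge0 ?exprn_ge0 //.
by rewrite lerXn2r // nnegrE.
Qed.

Lemma horner_dilate_ratio_le (a b l : R) : 0 <= a -> a <= b -> 1 <= l ->
  p.[b] * p.[l * a] <= p.[a] * p.[l * b].
Proof.
move=> a_ge0 ab l_ge1; rewrite -subr_ge0 !horner_coef.
set c := fun i : 'I_(size p) => p`_i.
pose D (i j : 'I_(size p)) := c i * c j * (a ^+ i * b ^+ j) * (l ^+ j - l ^+ i).
have -> : (\sum_i c i * a ^+ i) * (\sum_i c i * (l * b) ^+ i) -
          (\sum_i c i * b ^+ i) * (\sum_i c i * (l * a) ^+ i) = \sum_i \sum_j D i j.
  rewrite !big_distrlr [X in _ - X]exchange_big -sumrB; apply: eq_bigr => i _.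
  rewrite -sumrB; apply: eq_bigr => j _.
  by rewrite /D /= !exprMn; ring.
have sym : \sum_i \sum_j D i j = \sum_i \sum_j D j i by rewrite exchange_big.
(* Pair each term of the double sum with its mirror image in (i, j). *)
rewrite -(pmulr_rge0 _ (ltr0n R 2)) mulr2n mulrDl mul1r {2}sym -big_split /=.
apply: sumr_ge0 => i _; rewrite -big_split /=; apply: sumr_ge0 => j _.
have -> : D i j + D j i = c i * c j * ((l ^+ j - l ^+ i) * (a ^+ i * b ^+ j - a ^+ j * b ^+ i)).
  by rewrite /D; ring.
apply: mulr_ge0; first by rewrite mulr_ge0 ?p_coef_ge0.
exact: monomial_dilate_ge0.
Qed.

Lemma horner_cross_le (a b a' b' : R) : 0 < a -> a <= b -> a <= a' -> a' * b <= b' * a ->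
  p.[b] * p.[a'] <= p.[a] * p.[b'].
Proof.
move=> a_gt0 ab aa' cross.
have l_ge1 : 1 <= a' / a by rewrite ler_pdivlMr // mul1r.
rewrite -[a'](divfK (lt0r_neq0 a_gt0)).
apply: le_trans (horner_dilate_ratio_le (ltW a_gt0) ab l_ge1) _.
rewrite ler_wpM2l ?horner_ge0 ?(ltW a_gt0) // ler_horner //.
  by rewrite mulr_ge0 ?(le_trans ler01 l_ge1) ?(le_trans (ltW a_gt0) ab).
by rewrite mulrAC ler_pdivrMr.
Qed.
End NonnegCoefficients.

Section KofnPoly.
Variable R : realType.

Lemma kofn_poly_recl n k : (k <= n)%N ->
  kofn_poly R n k = 'C(n, k)%:R *: ('X ^+ k * (1 - 'X) ^+ (n - k)) + kofn_poly R n k.+1.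
Proof. by move=> kn; rewrite /kofn_poly big_ltn. Qed.

Lemma deriv_kofn_poly n k : (0 < k)%N -> (k <= n)%N ->
  (kofn_poly R n k)^`() = (n * 'C(n.-1, k.-1))%:R *: ('X ^+ k.-1 * (1 - 'X) ^+ (n - k)).
Proof.
move=> k_gt0 kn; have [d kdn] : exists d, (k + d)%N = n by exists (n - k)%N; rewrite subnKC.
elim: d k k_gt0 {kn} kdn => [|d IHd] k k_gt0 kdn.
  rewrite addn0 in kdn; rewrite -kdn /kofn_poly big_nat1 subnn !expr0 !mulr1 !binn.
  by rewrite scale1r muln1 derivXn scaler_nat.
have kn : (k < n)%N by rewrite -kdn -addSnnS leq_addr.
rewrite kofn_poly_recl ?(ltnW kn) // derivD IHd //; last by rewrite addSnnS.
have -> : (n - k = d.+1)%N by rewrite -kdn addKn.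
have -> : (n - k.+1 = d)%N by rewrite -kdn subnS addKn.
have -> : (n * 'C(n.-1, k.-1) = k * 'C(n, k))%N by rewrite mul_bin_diag prednK.
have -> : (n * 'C(n.-1, k) = d.+1 * 'C(n, k))%N by rewrite mul_bin_down -kdn addKn.
case: k k_gt0 {IHd kdn kn} => // k _ /=.
by rewrite !derivCE /= -!mul_polyC !exprS; ring.
Qed.

Definition kofn_tail n k : {poly R} := \poly_(i < (n - k).+1) 'C(n, k + i)%:R.

Lemma kofn_tail_coef_ge0 n k i : 0 <= (kofn_tail n k)`_i.
Proof. by rewrite coef_poly; case: ifP. Qed.

(* For u = 1 the odds u / (1 - u) is the junk value 0; the identity then only
   survives when (1 - u) ^+ (n - k) is 0 ^+ 0. *)
Lemma horner_kofn_poly n k u : (k <= n)%N -> (u != 1) || (k == n) ->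
  (kofn_poly R n k).[u] = u ^+ k * (1 - u) ^+ (n - k) * (kofn_tail n k).[u / (1 - u)].
Proof.
move=> kn u_k; rewrite /kofn_poly horner_sum horner_poly mulr_sumr -{1}(add0n k) big_addn.
rewrite subSn // big_mkord; apply: eq_bigr => i _ /=.
have ink : (i <= n - k)%N by rewrite -ltnS.
rewrite hornerZ hornerM hornerXn horner_exp hornerD hornerN hornerX hornerC.
rewrite expr_div_n addnC subnDA.
case: (posnP i) => [->|i_gt0]; first by rewrite !(addn0, subn0, expr0, divr1); ring.
have u1 : 1 - u != 0.
  rewrite subr_eq0 eq_sym; case/orP: u_k => // /eqP nk.
  by have := leq_trans i_gt0 ink; rewrite nk subnn.
have -> : (1 - u) ^+ (n - k) = (1 - u) ^+ (n - k - i) * (1 - u) ^+ i by rewrite -exprD subnK.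
rewrite exprD; field.
by rewrite expf_neq0.
Qed.

Lemma kofn_poly_gt0 n k u : (k <= n)%N -> 0 < u -> u <= 1 -> 0 < (kofn_poly R n k).[u].
Proof.
move=> kn u_gt0 u_le1; rewrite /kofn_poly horner_sum big_nat_recr //= subnn binn.
rewrite hornerZ hornerM hornerXn horner_exp !expr0 mulr1 mul1r ltr_wpDl ?exprn_gt0 //.
apply: sumr_ge0 => j _.
rewrite hornerZ hornerM hornerXn horner_exp hornerD hornerN hornerX hornerC.
by rewrite mulr_ge0 ?ler0n ?mulr_ge0 ?exprn_ge0 ?subr_ge0 ?(ltW u_gt0).
Qed.
End KofnPoly.

Definition elasticity (R : fieldType) (p : {poly R}) (u : R) : R := u * p^`().[u] / p.[u].

Definition odds (R : fieldType) (u : R) : R := u / (1 - u).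

Section Odds.
Variable R : realFieldType.

Lemma odds_ge0 (u : R) : 0 <= u -> u < 1 -> 0 <= odds u.
Proof. by move=> u_ge0 u_lt1; rewrite divr_ge0 // subr_ge0 ltW. Qed.

Lemma odds_gt0 (u : R) : 0 < u -> u < 1 -> 0 < odds u.
Proof. by move=> u_gt0 u_lt1; rewrite divr_gt0 // subr_gt0. Qed.

Lemma ler_odds (u v : R) : 0 <= u -> u <= v -> v < 1 -> odds u <= odds v.
Proof.
move=> u_ge0 uv v_lt1; have u_lt1 := le_lt_trans uv v_lt1.
rewrite /odds ler_pdivrMr ?subr_gt0 // mulrAC ler_pdivlMr ?subr_gt0 //; nra.
Qed.

Lemma odds_cross_le (s q1 q2 : R) : 0 < q2 -> q2 <= q1 -> q1 < s -> s <= 1 ->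
  odds (q2 / s) * odds q1 <= odds (q1 / s) * odds q2.
Proof.
move=> q2_gt0 q21 q1s s_le1; rewrite -subr_ge0.
have -> : odds (q1 / s) * odds q2 - odds (q2 / s) * odds q1 =
    q1 * q2 * (q1 - q2) * (1 - s) / ((s - q1) * (s - q2) * (1 - q1) * (1 - q2)).
  by rewrite /odds; field; rewrite !lt0r_neq0 ?subr_gt0 //; lra.
by rewrite divr_ge0 ?mulr_ge0 ?subr_ge0 //; lra.
Qed.
End Odds.

Section KofnElasticity.
Variables (R : realType) (n k : nat).
Hypotheses (k_gt0 : (0 < k)%N) (kn : (k <= n)%N).

Let K : R := (n * 'C(n.-1, k.-1))%:R.

Let K_gt0 : 0 < K.
Proof. by rewrite ltr0n muln_gt0 bin_gt0 (leq_trans k_gt0 kn) -!subn1 leq_sub2r. Qed.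

Lemma horner_deriv_kofn_poly (u : R) :
  (kofn_poly R n k)^`().[u] = K * (u ^+ k.-1 * (1 - u) ^+ (n - k)).
Proof.
rewrite deriv_kofn_poly // hornerZ hornerM hornerXn horner_exp.
by rewrite hornerD hornerN hornerX hornerC.
Qed.

Lemma elasticity_kofn_poly (u : R) : u != 0 -> (u != 1) || (k == n) ->
  elasticity (kofn_poly R n k) u = K / (kofn_tail R n k).[odds u].
Proof.
move=> u0 u_k; rewrite /elasticity horner_kofn_poly // horner_deriv_kofn_poly.
have pow_neq0 : (1 - u) ^+ (n - k) != 0.
  case/orP: u_k => [u1|/eqP->]; last by rewrite subnn expr0 oner_neq0.
  by rewrite expf_neq0 // subr_eq0 eq_sym.
have -> : u ^+ k = u * u ^+ k.-1 by rewrite -exprS prednK.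
set X := u * u ^+ k.-1 * (1 - u) ^+ (n - k).
have -> : u * (K * (u ^+ k.-1 * (1 - u) ^+ (n - k))) = K * X by rewrite /X; ring.
by rewrite invfM mulrA mulfK // /X !mulf_neq0 // expf_neq0.
Qed.

Lemma elasticity_kofn_poly1 : (k < n)%N -> elasticity (kofn_poly R n k) 1 = 0.
Proof.
move=> k_lt_n; rewrite /elasticity horner_deriv_kofn_poly subrr expr0n.
by rewrite subn_eq0 leqNgt k_lt_n !(mulr0, mul0r).
Qed.

Lemma elasticity_kofn_poly_ge0 (u : R) :
  0 < u -> u <= 1 -> 0 <= elasticity (kofn_poly R n k) u.
Proof.
move=> u_gt0 u_le1; rewrite /elasticity horner_deriv_kofn_poly.
rewrite divr_ge0 ?(ltW (kofn_poly_gt0 _ _ _)) //.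
by rewrite !mulr_ge0 ?ler0n ?exprn_ge0 ?subr_ge0 ?(ltW u_gt0).
Qed.

Lemma kofn_tail_gt0 (x : R) : 0 <= x -> 0 < (kofn_tail R n k).[x].
Proof.
move=> x_ge0; apply: lt_le_trans (ler_horner (kofn_tail_coef_ge0 _ _ _) (lexx 0) x_ge0).
by rewrite horner_coef0 coef_poly /= addn0 ltr0n bin_gt0.
Qed.

Lemma horner_kofn_tail_nn (x : R) : (kofn_tail R n n).[x] = 1.
Proof. by rewrite horner_poly subnn big_ord1 addn0 binn expr0 mulr1. Qed.

Lemma kofn_elasticity_ratio_tail (s q : R) : 0 < q -> q < s -> s <= 1 ->
  elasticity (kofn_poly R n k) (q / s) / elasticity (kofn_poly R n k) q =
  (kofn_tail R n k).[odds q] / (kofn_tail R n k).[odds (q / s)].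
Proof.
move=> q_gt0 qs s_le1; have s_gt0 : 0 < s := lt_trans q_gt0 qs.
have p_gt0 : 0 < q / s by rewrite divr_gt0.
have p_lt1 : q / s < 1 by rewrite ltr_pdivrMr // mul1r.
have q_lt1 : q < 1 := lt_le_trans qs s_le1.
rewrite !elasticity_kofn_poly ?lt0r_neq0 ?(lt_eqF p_lt1, lt_eqF q_lt1) //.
have [T_gt0 T'_gt0] : 0 < (kofn_tail R n k).[odds q] /\ 0 < (kofn_tail R n k).[odds (q / s)].
  by split; apply/kofn_tail_gt0/odds_ge0; rewrite ?ltW.
move: K K_gt0 T_gt0 T'_gt0 => c c_gt0 T_gt0 T'_gt0.
by field; rewrite !lt0r_neq0.
Qed.

Lemma kofn_elasticity_ratio_antitone (s q1 q2 : R) :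
  0 < q2 -> q2 <= q1 -> q1 <= s -> s <= 1 ->
  elasticity (kofn_poly R n k) (q1 / s) / elasticity (kofn_poly R n k) q1 <=
  elasticity (kofn_poly R n k) (q2 / s) / elasticity (kofn_poly R n k) q2.
Proof.
move=> q2_gt0 q21 q1s s_le1.
have q1_gt0 : 0 < q1 := lt_le_trans q2_gt0 q21.
have s_gt0 : 0 < s := lt_le_trans q1_gt0 q1s.
have div_gt0 q : 0 < q -> 0 < q / s by move=> q_gt0; rewrite divr_gt0.
have [k_eq_n | k_neq_n] := eqVneq k n.
  rewrite !elasticity_kofn_poly ?k_eq_n ?eqxx ?orbT ?lt0r_neq0 ?div_gt0 //.
  by rewrite !horner_kofn_tail_nn.
have [q1_eq_s | q1_neq_s] := eqVneq q1 s.
  (* x = 0: when k < n, a system of new components has zero hazard at time 0. *)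
  rewrite q1_eq_s divff ?lt0r_neq0 // elasticity_kofn_poly1 ?ltn_neqAle ?k_neq_n // mul0r.
  rewrite divr_ge0 ?elasticity_kofn_poly_ge0 ?div_gt0 ?ler_pdivrMr ?mul1r //; lra.
have q1_lt_s : q1 < s by rewrite lt_neqAle q1_neq_s.
have q2_lt_s : q2 < s := le_lt_trans q21 q1_lt_s.
have tail_gt0 q : 0 < q -> q < s -> 0 < (kofn_tail R n k).[odds (q / s)].
  move=> q_gt0 qs; apply/kofn_tail_gt0/odds_ge0; first by rewrite ltW ?div_gt0.
  by rewrite ltr_pdivrMr // mul1r.
rewrite !kofn_elasticity_ratio_tail // ler_pdivlMr ?tail_gt0 //.
rewrite mulrAC ler_pdivrMr ?tail_gt0 //.
apply: horner_cross_le; first exact: kofn_tail_coef_ge0.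
- by apply: odds_gt0; lra.
- by apply: ler_odds; lra.
- apply: ler_odds; first exact: ltW.
    by rewrite ler_pdivlMr // ger_pMr.
  by rewrite ltr_pdivrMr // mul1r.
- exact: odds_cross_le.
Qed.
End KofnElasticity.

Lemma hazard_ratio_kofn_residual (R : realType) n k (W : lifetime R) t x :
  surv W t != 0 -> surv W (t + x) != 0 -> dens W (t + x) != 0 ->
  (kofn_poly R n k).[surv W t] != 0 ->
  hazard (kofn n k (residual t W)) x / hazard (residual t (kofn n k W)) x =
  elasticity (kofn_poly R n k) (surv W (t + x) / surv W t) /
  elasticity (kofn_poly R n k) (surv W (t + x)).
Proof.
rewrite /hazard /elasticity /=.
move: (surv W t) (surv W (t + x)) (dens W (t + x)) (kofn_poly R n k).
move=> s q f h s0 q0 f0 hs0; rewrite !(invfM, invrK).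
(* As x / 0 = 0, no nonvanishing of h or h' at q and q / s is needed: once the
   inverses are expanded, these values and inverses are independent variables. *)
move: (h^`().[q / s]) (h.[q / s]^-1) (h^`().[q]^-1) (h.[q]) => a b c d.
by field; rewrite q0 s0 hs0 f0.
Qed.

Theorem corollary5p1 (R : realType) (f : R -> R) (n k : nat) (t : R)
  (f_meas : measurable_fun setT f)
  (f_ge0 : forall x : R, 0 <= f x)
  (f_neg : forall x : R, x < 0 -> f x = 0)
  (f_pos : forall x : R, 0 <= x -> 0 < f x)
  (f_tot : (\int[@lebesgue_measure R]_x (f x)%:E = 1)%E)
  (hk1 : (1 <= k)%N) (hkn : (k <= n)%N) (ht : 0 <= t) :
  c_order (kofn n k (residual t (lifetime_of f)))
          (residual t (kofn n k (lifetime_of f))).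
Proof.
move=> x y x_ge0 xy.
have surv_gt0 z : 0 <= z -> 0 < survival f z.
  move=> z_ge0; apply: (survival_gt0 f_meas f_ge0 f_tot) => w zw.
  exact/f_pos/ltW/(le_lt_trans z_ge0).
have surv_anti := survival_anti f_meas f_ge0 f_tot.
have surv_le1 := survival_le1 f_meas f_ge0 f_tot.
have tx_ge0 : 0 <= t + x by rewrite addr_ge0.
have ty_ge0 : 0 <= t + y by rewrite addr_ge0 // (le_trans x_ge0 xy).
rewrite !hazard_ratio_kofn_residual /= ?lt0r_neq0 ?kofn_poly_gt0 ?surv_gt0 ?f_pos ?surv_le1 //.
apply: kofn_elasticity_ratio_antitone => //; first exact: surv_gt0.
- by apply: surv_anti; rewrite lerD2l.
- by apply: surv_anti; rewrite lerDl.
Qed.
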